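(* Let $K\ge1$, let $\mathbf{\Phi}\in\mathbb{R}^{m\times n}$ satisfy the RIP of order $2K$ with $\delta:=\delta_{2K}\in(0,1)$. Let $\mathbf{x}\in\mathbb{R}^n$ with $\mathcal{T}=\mathrm{supp}(\mathbf{x})$, $|\mathcal{T}|=K$, let $\kappa:=\max_{i,j\in\mathcal{T}}|x_i|/|x_j|$, let $\mathbf{v}\in\mathbb{R}^m$, $\mathbf{y}=\mathbf{\Phi}\mathbf{x}+\mathbf{v}$, and assume $\mathrm{SNR}\ge\kappa^2\delta^{-3/2}$. Then for every $0\le k\le K-\lceil\delta^{1/2}K\rceil$ (with $k<K$), the OMP residuals satisfy $$\|\mathbf{r}^k\|_2^2-\|\mathbf{r}^{k+1}\|_2^2 \ge (1-7\delta^{1/2})\,\bigl(x^k_{\delta^{1/2}}\bigr)^2.$$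
   Context: $\phi_i$ is the $i$-th column of $\mathbf{\Phi}$. RIP: for an integer $s\ge1$, the isometry constant $\delta_s$ of $\mathbf{\Phi}$ is the smallest $c\in[0,1)$ such that $(1-c)\|\mathbf{z}\|_2^2 \le \|\mathbf{\Phi}\mathbf{z}\|_2^2 \le (1+c)\|\mathbf{z}\|_2^2$ for all $s$-sparse $\mathbf{z}$. $\mathrm{SNR} := \|\mathbf{\Phi}\mathbf{x}\|_2^2/\|\mathbf{v}\|_2^2$. OMP with input $\mathbf{\Phi},\mathbf{y},K$: set $\mathcal{T}^0=\emptyset$, $\mathbf{r}^0=\mathbf{y}$; for $k=1,\dots,K$: choose $t^k \in \arg\max_{i\notin\mathcal{T}^{k-1}} |\langle\phi_i,\mathbf{r}^{k-1}\rangle|$ (ties arbitrary), set $\mathcal{T}^k=\mathcal{T}^{k-1}\cup\{t^k\}$, $\mathbf{x}^k = \arg\min_{\mathrm{supp}(\mathbf{u})\subseteq\mathcal{T}^k}\|\mathbf{y}-\mathbf{\Phi}\mathbf{u}\|_2$, $\mathbf{r}^k=\mathbf{y}-\mathbf{\Phi}\mathbf{x}^k$. For $0\le k\le K$: $\Gamma^k:=\mathcal{T}\setminus\mathcal{T}^k$; for $\tau\in(0,1]$, $x^k_\tau$ denotes the magnitude of the $\lceil\tau K\rceil$-th largest entry (in magnitude) of $\mathbf{x}_{\Gamma^k}$, with $x^k_\tau:=0$ if $\lceil\tau K\rceil>|\Gamma^k|$. *)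

(* The real field is abstracted as an arbitrary R : rcfType
   (real closed field; needed for square roots), which includes the reals. *)
From HB Require Import structures.
From mathcomp Require Import all_boot all_order all_algebra.
Set Implicit Arguments. Unset Strict Implicit. Unset Printing Implicit Defensive.
Import Order.TTheory GRing.Theory Num.Theory.
Local Open Scope ring_scope.

Section Defs.
Variable R : rcfType.

Definition sqnorm (p : nat) (z : 'cV[R]_p) : R := \sum_(i < p) (z i 0) ^+ 2.

Definition supp (p : nat) (z : 'cV[R]_p) : {set 'I_p} := [set i | z i 0 != 0].

Definition sparse (p s : nat) (z : 'cV[R]_p) : Prop := (#|supp z| <= s)%N.

Definition RIP_ineq (m n s : nat) (Phi : 'M[R]_(m, n)) (c : R) : Prop :=
  forall z : 'cV[R]_n, sparse s z ->
    (1 - c) * sqnorm z <= sqnorm (Phi *m z) /\ sqnorm (Phi *m z) <= (1 + c) * sqnorm z.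

Definition is_RIC (m n s : nat) (Phi : 'M[R]_(m, n)) (d : R) : Prop :=
  [/\ 0 <= d, d < 1, RIP_ineq s Phi d &
      forall c, 0 <= c -> c < 1 -> RIP_ineq s Phi c -> d <= c].

Definition colcorr (m n : nat) (Phi : 'M[R]_(m, n)) (i : 'I_n) (r : 'cV[R]_m) : R :=
  \sum_(j < m) Phi j i * r j 0.

Definition resid (m n : nat) (Phi : 'M[R]_(m, n)) (y : 'cV[R]_m) (u : 'cV[R]_n)
  : 'cV[R]_m := y - Phi *m u.

(* (T, xs) is a run of OMP on input (Phi, y, K) (with arbitrary tie-breaking):
   T k = T^k, xs k = x^k, residual r^k = y - Phi x^k. *)
Definition OMP_run (m n : nat) (Phi : 'M[R]_(m, n)) (y : 'cV[R]_m) (K : nat)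
  (T : nat -> {set 'I_n}) (xs : nat -> 'cV[R]_n) : Prop :=
  [/\ T 0%N = set0, xs 0%N = 0 &
   forall k, (k < K)%N ->
     exists t : 'I_n,
       [/\ t \notin T k,
           (forall i, i \notin T k ->
              `|colcorr Phi i (resid Phi y (xs k))| <= `|colcorr Phi t (resid Phi y (xs k))|),
           T k.+1 = t |: T k,
           supp (xs k.+1) \subset T k.+1 &
           (forall u : 'cV[R]_n, supp u \subset T k.+1 ->
              sqnorm (resid Phi y (xs k.+1)) <= sqnorm (resid Phi y u))]].

Definition is_ceil (a : R) (c : nat) : Prop := (c%:R - 1 < a) /\ (a <= c%:R).

(* magnitude of the c-th largest entry (in magnitude) of x restricted to A,
   and 0 if c > |A| (c >= 1 intended) *)
Definition kth_largest (n : nat) (x : 'cV[R]_n) (A : {set 'I_n}) (c : nat) : R :=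
  if (1 <= c <= #|A|)%N
  then nth 0 (sort (fun a b : R => b <= a) [seq `|x i 0| | i in A]) c.-1
  else 0.

Definition dyn_range (n : nat) (x : 'cV[R]_n) : R :=
  \big[Num.max/0]_(i in supp x) \big[Num.max/0]_(j in supp x) (`|x i 0| / `|x j 0|).

End Defs.

From HB Require Import structures.
From mathcomp Require Import all_boot all_order all_algebra.
From mathcomp Require Import ring lra.
Set Implicit Arguments. Unset Strict Implicit. Unset Printing Implicit Defensive.
Import Order.TTheory GRing.Theory Num.Theory.
Local Open Scope ring_scope.

(* Let r be the residual at step k and g its correlation with the column OMP selects.
   Adding a multiple of that column to x^k shows that the residual drops by at least
   g^2/(1+delta).  To bound |g| from below, split z = x - x^k into its part P on the set S
   of unselected support indices with |x_i| >= X (X the order statistic of the claim),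
   the remaining unselected part B, and the part W on T^k.  Near-orthogonality of
   disjointly supported vectors under the RIP makes <Phi P, r> at least about ||P||^2,
   while the selection rule bounds it by |g| sqrt|S| ||P||.  W is small because r is
   orthogonal to the selected columns, B because its entries are below X, and the noise
   by the SNR assumption; since |S| >= sqrt(delta) K this yields
   (1 - 3 sqrt delta) X <= |g|, and squaring gives the claim. *)

Section Euclidean.
Variable R : rcfType.
Implicit Types (p : nat) (l : R).

Definition dot p (a b : 'cV[R]_p) : R := \sum_(i < p) a i 0 * b i 0.

Definition enorm p (a : 'cV[R]_p) : R := Num.sqrt (sqnorm a).

Lemma sqnormE p (a : 'cV[R]_p) : sqnorm a = dot a a.
Proof. by apply: eq_bigr => i _; rewrite expr2. Qed.

Lemma sqnorm_ge0 p (a : 'cV[R]_p) : 0 <= sqnorm a.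
Proof. by apply: sumr_ge0 => i _; rewrite sqr_ge0. Qed.

Lemma enorm_ge0 p (a : 'cV[R]_p) : 0 <= enorm a.
Proof. exact: sqrtr_ge0. Qed.

Lemma sqr_enorm p (a : 'cV[R]_p) : enorm a ^+ 2 = sqnorm a.
Proof. by rewrite sqr_sqrtr // sqnorm_ge0. Qed.

Lemma dotC p (a b : 'cV[R]_p) : dot a b = dot b a.
Proof. by apply: eq_bigr => i _; rewrite mulrC. Qed.

Lemma dotDl p (a b c : 'cV[R]_p) : dot (a + b) c = dot a c + dot b c.
Proof. by rewrite /dot -big_split; apply: eq_bigr => i _; rewrite !mxE mulrDl. Qed.

Lemma dotZl p l (a c : 'cV[R]_p) : dot (l *: a) c = l * dot a c.
Proof. by rewrite /dot mulr_sumr; apply: eq_bigr => i _; rewrite !mxE mulrA. Qed.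

Lemma dotDr p (a b c : 'cV[R]_p) : dot c (a + b) = dot c a + dot c b.
Proof. by rewrite dotC dotDl !(dotC c). Qed.

Lemma dotZr p l (a c : 'cV[R]_p) : dot c (l *: a) = l * dot c a.
Proof. by rewrite dotC dotZl dotC. Qed.

Lemma dot_eq0 p (a b : 'cV[R]_p) : (forall i, a i 0 * b i 0 = 0) -> dot a b = 0.
Proof. by move=> ab0; apply: big1 => i _. Qed.

Lemma sqnormD p (a b : 'cV[R]_p) :
  sqnorm (a + b) = sqnorm a + 2 * dot a b + sqnorm b.
Proof. by rewrite !sqnormE dotDl !dotDr (dotC b a); ring. Qed.

Lemma sqnormZ p l (a : 'cV[R]_p) : sqnorm (l *: a) = l ^+ 2 * sqnorm a.
Proof. by rewrite !sqnormE dotZl dotZr; ring. Qed.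

Lemma le_of_sqr_le (a b : R) : 0 <= b -> a ^+ 2 <= b ^+ 2 -> a <= b.
Proof.
move=> b0 /ler_wsqrtr; rewrite !sqrtr_sqr (ger0_norm b0); exact: le_trans (ler_norm a).
Qed.

Lemma norm_le_of_sqr_le (a b : R) : 0 <= b -> a ^+ 2 <= b ^+ 2 -> `|a| <= b.
Proof. by move=> b0 ab; apply: le_of_sqr_le; rewrite // real_normK ?num_real. Qed.

Lemma quadratic_ge0_disc (A q C : R) : 0 <= A ->
  (forall l, 0 <= l ^+ 2 * A + 2 * l * q + C) -> q ^+ 2 <= A * C.
Proof.
move=> A0 quad_ge0; have C0 := quad_ge0 0; rewrite expr0n /= mul0r mulr0 !add0r in C0.
have [A_eq0|A_neq0] := eqVneq A 0.
  rewrite A_eq0 mul0r; have [->|q_neq0] := eqVneq q 0; first by rewrite expr0n.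
  have := quad_ge0 (- (C + 1) / (2 * q)); rewrite A_eq0 mulr0 add0r.
  have -> : 2 * (- (C + 1) / (2 * q)) * q = - (C + 1) by field; rewrite q_neq0.
  lra.
have A_gt0 : 0 < A by rewrite lt_def A_neq0.
have := quad_ge0 (- q / A).
have -> : (- q / A) ^+ 2 * A + 2 * (- q / A) * q + C = C - q ^+ 2 / A.
  by field; rewrite A_neq0.
by rewrite subr_ge0 ler_pdivrMr // mulrC.
Qed.

Lemma dot_sqr_le p (a b : 'cV[R]_p) : dot a b ^+ 2 <= sqnorm a * sqnorm b.
Proof.
apply: quadratic_ge0_disc; first exact: sqnorm_ge0.
by move=> l; rewrite -sqnormZ -mulrA -dotZl -sqnormD sqnorm_ge0.
Qed.

Lemma dot_norm_le p (a b : 'cV[R]_p) : `|dot a b| <= enorm a * enorm b.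
Proof.
by apply: norm_le_of_sqr_le; rewrite ?mulr_ge0 ?enorm_ge0 // exprMn !sqr_enorm dot_sqr_le.
Qed.

Lemma sqnorm_lin p l e (a b : 'cV[R]_p) :
  sqnorm (l *: a + e *: b) = l ^+ 2 * sqnorm a + 2 * l * e * dot a b + e ^+ 2 * sqnorm b.
Proof. by rewrite sqnormD !sqnormZ dotZl dotZr; ring. Qed.

Lemma supp_subP p (z : 'cV[R]_p) (U : {set 'I_p}) :
  reflect (forall i, i \notin U -> z i 0 = 0) (supp z \subset U).
Proof.
apply: (iffP subsetP) => [zU i|zU i]; last by rewrite inE; apply: contraR => /zU ->.
by apply: contraNeq => zi; apply: zU; rewrite inE.
Qed.

Lemma supp_lin_sub p l e (a b : 'cV[R]_p) (U : {set 'I_p}) :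
  supp a \subset U -> supp b \subset U -> supp (l *: a + e *: b) \subset U.
Proof.
move=> /supp_subP aU /supp_subP bU; apply/supp_subP => i iU.
by rewrite !mxE aU // bU // !mulr0 addr0.
Qed.

End Euclidean.

Section RestrictedIsometry.
Variables (R : rcfType) (m n s : nat) (Phi : 'M[R]_(m, n)) (d : R).
Hypotheses (d_ge0 : 0 <= d) (rip : RIP_ineq s Phi d).
Variable U : {set 'I_n}.
Hypothesis card_U : (#|U| <= s)%N.

Let sparseU (z : 'cV[R]_n) : supp z \subset U -> sparse s z.
Proof. by move=> zU; apply: leq_trans card_U; apply: subset_leq_card. Qed.

Lemma rip_lower (z : 'cV[R]_n) : supp z \subset U -> (1 - d) * sqnorm z <= sqnorm (Phi *m z).
Proof. by move=> /sparseU /rip []. Qed.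

Lemma rip_upper (z : 'cV[R]_n) : supp z \subset U -> sqnorm (Phi *m z) <= (1 + d) * sqnorm z.
Proof. by move=> /sparseU /rip []. Qed.

Lemma rip_enorm_le (z : 'cV[R]_n) : supp z \subset U ->
  enorm (Phi *m z) <= Num.sqrt (1 + d) * enorm z.
Proof.
move=> /rip_upper upper; apply: le_of_sqr_le.
  by rewrite mulr_ge0 ?sqrtr_ge0 ?enorm_ge0.
have d1_ge0 : 0 <= 1 + d by rewrite addr_ge0.
by rewrite exprMn !sqr_enorm sqr_sqrtr.
Qed.

(* Compare the RIP upper bound for [l a - b] with the lower one for [l a + b]. *)
Lemma rip_dot_disjoint (a b : 'cV[R]_n) :
  supp a \subset U -> supp b \subset U -> (forall i, a i 0 * b i 0 = 0) ->
  `|dot (Phi *m a) (Phi *m b)| <= d * enorm a * enorm b.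
Proof.
move=> aU bU ab0; apply: norm_le_of_sqr_le; first by rewrite !mulr_ge0 ?enorm_ge0.
have -> : (d * enorm a * enorm b) ^+ 2 = (d * sqnorm a) * (d * sqnorm b).
  by rewrite -!sqr_enorm; ring.
apply: quadratic_ge0_disc => [|l]; first by rewrite mulr_ge0 ?sqnorm_ge0.
have [lower _] := rip (sparseU (supp_lin_sub l 1 aU bU)).
have [_ upper] := rip (sparseU (supp_lin_sub l (-1) aU bU)).
move: lower upper; rewrite !mulmxDr -!scalemxAr !sqnorm_lin (dot_eq0 ab0).
nra.
Qed.

Lemma rip_resid_corr_le (a b : 'cV[R]_n) (w : 'cV[R]_m) (M : R) :
  supp a \subset U -> supp b \subset U -> (forall i, a i 0 * b i 0 = 0) -> 0 <= M ->
  dot (Phi *m a) (Phi *m a + Phi *m b + w) <= enorm a * M ->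
  (1 - d) * enorm a - d * enorm b - Num.sqrt (1 + d) * enorm w <= M.
Proof.
move=> aU bU ab0 M_ge0 corr_le.
have [a0|a_gt0] := eqVneq (enorm a) 0.
  rewrite a0 mulr0 add0r; apply: le_trans M_ge0.
  by rewrite subr_le0 -lerNl; apply: le_trans (_ : 0 <= _);
    rewrite ?oppr_le0 ?mulr_ge0 ?enorm_ge0 ?sqrtr_ge0.
have {a_gt0}a_gt0 : 0 < enorm a by rewrite lt_def a_gt0 enorm_ge0.
rewrite -(ler_pM2l a_gt0); apply: le_trans corr_le; rewrite !dotDr -sqnormE.
have := rip_lower aU; have := rip_dot_disjoint aU bU ab0; rewrite ler_norml => /andP[cross _].
have := dot_norm_le (Phi *m a) w; rewrite ler_norml => /andP[noise _].
have := ler_wpM2r (enorm_ge0 w) (rip_enorm_le aU); rewrite -!sqr_enorm.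
nra.
Qed.

End RestrictedIsometry.

Section LeastSquares.
Variables (R : rcfType) (m n : nat) (Phi : 'M[R]_(m, n)) (y : 'cV[R]_m).
Variables (U : {set 'I_n}) (xopt : 'cV[R]_n).
Hypothesis xopt_min :
  forall u, supp u \subset U -> sqnorm (resid Phi y xopt) <= sqnorm (resid Phi y u).

Lemma resid_addZ (u h : 'cV[R]_n) l :
  resid Phi y (u + l *: h) = resid Phi y u + (- l) *: (Phi *m h).
Proof. by rewrite /resid mulmxDr -scalemxAr scaleNr opprD addrA. Qed.

Lemma lsq_orth (h : 'cV[R]_n) :
  supp xopt \subset U -> supp h \subset U -> dot (Phi *m h) (resid Phi y xopt) = 0.
Proof.
move=> xU hU; apply/eqP; rewrite dotC -sqrf_eq0 eq_le sqr_ge0 andbT.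
rewrite -(mulr0 (sqnorm (Phi *m h))); apply: quadratic_ge0_disc => [|l].
  exact: sqnorm_ge0.
have := xopt_min (supp_lin_sub 1 (- l) xU hU).
rewrite scale1r resid_addZ opprK sqnormD sqnormZ dotZr; lra.
Qed.

Lemma lsq_decrease (u h : 'cV[R]_n) (C : R) :
  supp u \subset U -> supp h \subset U -> 0 < C -> sqnorm (Phi *m h) <= C ->
  dot (Phi *m h) (resid Phi y u) ^+ 2 / C
    <= sqnorm (resid Phi y u) - sqnorm (resid Phi y xopt).
Proof.
move=> uU hU C_gt0 PhihC; set g := dot _ _; set al := g / C.
have := xopt_min (supp_lin_sub 1 al uU hU).
rewrite scale1r resid_addZ sqnormD sqnormZ sqrrN dotZr dotC -/g.
have -> : g ^+ 2 / C = 2 * al * g - al ^+ 2 * C by rewrite /al; field; rewrite gt_eqF.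
have := ler_wpM2l (sqr_ge0 al) PhihC; lra.
Qed.

End LeastSquares.

Section Restriction.
Variables (R : rcfType) (p : nat).
Implicit Types (z u : 'cV[R]_p) (A B C : {set 'I_p}).

Definition restrict z A : 'cV[R]_p := \col_i (if i \in A then z i 0 else 0).

Lemma restrict_add_compl z A : restrict z A + restrict z (~: A) = z.
Proof.
by apply/matrixP => i j; rewrite ord1 !mxE inE; case: (i \in A); rewrite ?addr0 ?add0r.
Qed.

Lemma restrict_mul_compl z A i : restrict z A i 0 * restrict z (~: A) i 0 = 0.
Proof. by rewrite !mxE inE; case: (i \in A); rewrite ?mulr0 ?mul0r. Qed.

Lemma supp_restrict z A : supp (restrict z A) \subset supp z :&: A.
Proof.
apply/supp_subP => i; rewrite !inE negb_and negbK mxE => /orP[/eqP ->|/negbTE ->] //.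
by case: ifP.
Qed.

Lemma sqnorm_restrict_le z A B C : A \subset B :|: C ->
  sqnorm (restrict z A) <= sqnorm (restrict z B) + sqnorm (restrict z C).
Proof.
move=> /subsetP ABC; rewrite -big_split; apply: ler_sum => i _; rewrite !mxE.
have := ABC i; rewrite inE.
case: (i \in A) => [/(_ isT)|_]; last by rewrite expr0n addr_ge0 ?sqr_ge0.
by case: (i \in B); case: (i \in C) => //= _; rewrite ?expr0n ?addr0 ?add0r ?lerDl ?lerDr ?sqr_ge0.
Qed.

Lemma enorm_restrict_le z A B C : A \subset B :|: C ->
  enorm (restrict z A) <= enorm (restrict z B) + enorm (restrict z C).
Proof.
move=> ABC; apply: le_of_sqr_le; first by rewrite addr_ge0 ?enorm_ge0.
rewrite sqr_enorm (le_trans (sqnorm_restrict_le z ABC)) // sqrrD !sqr_enorm.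
by rewrite lerD2r lerDl mulrn_wge0 // mulr_ge0 ?enorm_ge0.
Qed.

Lemma sqnorm_restrict_ge z A (X : R) : 0 <= X -> (forall i, i \in A -> X <= `|z i 0|) ->
  #|A|%:R * X ^+ 2 <= sqnorm (restrict z A).
Proof.
move=> X_ge0 zX; rewrite /sqnorm (bigID (mem A)) /= -[X in X <= _]addr0.
apply: lerD; last by apply: sumr_ge0 => i _; rewrite sqr_ge0.
rewrite mulr_natl -sumr_const; apply: ler_sum => i iA; rewrite mxE iA.
by rewrite -[z i 0 ^+ 2]real_normK ?num_real // ler_sqr ?nnegrE // zX.
Qed.

Lemma sqnorm_le_card u A (Y : R) : supp u \subset A -> (forall i, i \in A -> `|u i 0| <= Y) ->
  sqnorm u <= #|A|%:R * Y ^+ 2.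
Proof.
move=> /supp_subP uA uY; rewrite /sqnorm (bigID (mem A)) /= [X in _ + X]big1;
  last by move=> i /uA ->; rewrite expr0n.
rewrite addr0 mulr_natl -sumr_const; apply: ler_sum => i iA.
rewrite -[u i 0 ^+ 2]real_normK ?num_real //.
by rewrite ler_sqr ?nnegrE ?uY // (le_trans _ (uY _ iA)).
Qed.

End Restriction.

Lemma sum_norm_le (R : rcfType) p (u : 'cV[R]_p) (A : {set 'I_p}) : supp u \subset A ->
  \sum_i `|u i 0| <= Num.sqrt #|A|%:R * enorm u.
Proof.
move=> uA; set ind := restrict (const_mx 1 : 'cV[R]_p) A; set absu := map_mx (fun a : R => `|a|) u.
have -> : \sum_i `|u i 0| = dot ind absu.
  apply: eq_bigr => i _; rewrite !mxE; case: ifP => iA; first by rewrite mul1r.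
  by move/supp_subP: uA => ->; rewrite ?iA // normr0 mul0r.
have ind_le : enorm ind <= Num.sqrt #|A|%:R.
  apply: ler_wsqrtr; rewrite -[X in _ <= X]mulr1 -[X in _ * X](expr1n _ 2).
  apply: sqnorm_le_card => [|i _]; first exact: subset_trans (supp_restrict _ _) (subsetIr _ _).
  by rewrite !mxE; case: ifP; rewrite ?normr1 ?normr0.
have -> : enorm u = enorm absu.
  by congr Num.sqrt; apply: eq_bigr => i _; rewrite mxE real_normK ?num_real.
apply: le_trans (ler_norm _) (le_trans (dot_norm_le _ _) _).
by rewrite ler_wpM2r ?enorm_ge0.
Qed.

Section Correlation.
Variables (R : rcfType) (m n : nat) (Phi : 'M[R]_(m, n)) (r : 'cV[R]_m).

Lemma dot_mulmx (u : 'cV[R]_n) : dot (Phi *m u) r = \sum_i u i 0 * colcorr Phi i r.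
Proof.
rewrite /dot /colcorr; under eq_bigr do rewrite mxE mulr_suml.
rewrite exchange_big /=; apply: eq_bigr => i _.
by rewrite mulr_sumr; apply: eq_bigr => j _; ring.
Qed.

Lemma colcorrE (t : 'I_n) : colcorr Phi t r = dot (Phi *m delta_mx t 0) r.
Proof.
rewrite dot_mulmx (bigD1 t) //= big1 => [|i it]; first by rewrite !mxE !eqxx mul1r addr0.
by rewrite !mxE (negbTE it) mul0r.
Qed.

Lemma dot_mulmx_le (u : 'cV[R]_n) (A : {set 'I_n}) (G : R) :
  supp u \subset A -> 0 <= G -> (forall i, i \in A -> `|colcorr Phi i r| <= G) ->
  dot (Phi *m u) r <= G * (Num.sqrt #|A|%:R * enorm u).
Proof.
move=> uA G_ge0 corr_le; rewrite dot_mulmx.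
apply: le_trans (_ : \sum_i `|u i 0| * G <= _); last first.
  by rewrite -mulr_suml mulrC ler_wpM2l // sum_norm_le.
apply: ler_sum => i _; apply: le_trans (ler_norm _) _; rewrite normrM.
have [iA|iA] := boolP (i \in A); first by rewrite ler_wpM2l ?corr_le.
by move/supp_subP: uA => ->; rewrite ?normr0 ?mul0r.
Qed.

End Correlation.

Section OrderStatistics.
Variables (R : rcfType) (n : nat) (x : 'cV[R]_n) (A : {set 'I_n}) (c : nat).
Hypothesis c_range : (1 <= c <= #|A|)%N.

Let ge (a b : R) := b <= a.
Let ss := sort ge [seq `|x i 0| | i in A].

Let kth_largestE : kth_largest x A c = nth 0 ss c.-1.
Proof. by rewrite /kth_largest c_range. Qed.

Let size_ss : size ss = #|A|.
Proof. by rewrite size_sort size_map -cardE. Qed.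

Lemma kth_largest_mem : exists2 j, j \in A & kth_largest x A c = `|x j 0|.
Proof.
have : nth 0 ss c.-1 \in [seq `|x i 0| | i in A].
  rewrite -(perm_mem (permEl (perm_sort ge _))) mem_nth // size_ss.
  by case/andP: c_range; case: c.
by case/mapP => j; rewrite mem_enum kth_largestE => jA ->; exists j.
Qed.

Lemma kth_largest_card : (c <= #|[set i in A | (kth_largest x A c <= `|x i 0|)%R]|)%N.
Proof.
case/andP: c_range => c_gt0 c_le; rewrite kth_largestE; set X := nth 0 ss c.-1.
have ge_trans : transitive ge by move=> a b d ba db; apply: le_trans db ba.
have ge_total : total ge by move=> a b; rewrite /ge le_total.
have take_ge : count (fun a => X <= a) (take c ss) = c.
  rewrite -[RHS](size_takel (s := ss)) ?size_ss //; apply/eqP; rewrite -all_count.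
  apply/(all_nthP 0) => i; rewrite size_takel ?size_ss // => ic; rewrite nth_take //.
  apply: (sorted_leq_nth ge_trans (fun a => lexx a) 0 (sort_sorted ge_total _));
    rewrite ?inE ?size_ss //; first exact: leq_trans ic c_le.
    - by case: c c_gt0 c_le => // c' _ /ltnW.
    - by case: c c_gt0 ic.
have -> : #|[set i in A | X <= `|x i 0|]| = count (fun a => X <= a) ss.
  rewrite (permP (permEl (perm_sort ge _))) count_map -size_filter.
  rewrite -(card_uniqP (filter_uniq _ (enum_uniq (mem A)))).
  by apply: eq_card => i; rewrite inE mem_filter mem_enum andbC.
by rewrite -(cat_take_drop c ss) count_cat take_ge leq_addr.
Qed.

End OrderStatistics.

Lemma dyn_range_ge (R : rcfType) n (x : 'cV[R]_n) i j : i \in supp x -> j \in supp x ->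
  `|x i 0| / `|x j 0| <= dyn_range x.
Proof.
move=> ix jx; apply: le_trans (le_bigmax_cond _ _ ix).
exact: (le_bigmax_cond _ _ jx).
Qed.

Lemma omp_run_inv (R : rcfType) m n (Phi : 'M[R]_(m, n)) y K T xs :
  OMP_run Phi y K T xs -> forall k, (k <= K)%N ->
  [/\ (#|T k| <= k)%N, supp (xs k) \subset T k &
      forall u, supp u \subset T k -> sqnorm (resid Phi y (xs k)) <= sqnorm (resid Phi y u)].
Proof.
case=> T0 x0 step; elim=> [|k IH] kK.
  rewrite T0 x0 cards0; split => //; first by apply/supp_subP => i; rewrite mxE.
  move=> u /supp_subP u0; have -> // : u = 0.
  by apply/matrixP => i j; rewrite ord1 mxE u0 ?inE.
have [t [_ _ Tk1 supp_xk1 xk1_min]] := step k kK; have [card_Tk _ _] := IH (ltnW kK).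
by split => //; rewrite Tk1 cardsU1 -add1n leq_add ?leq_b1.
Qed.

Section GainAlgebra.
Variable R : rcfType.

Lemma omp_gain_factor (s a b w u G q X K : R) :
  0 < s -> s < 7%:R^-1 -> 0 < q -> 0 < X -> 0 <= b ->
  (1 - s ^+ 2) * a - s ^+ 2 * (b + w) - u <= G * q ->
  (1 - s ^+ 2) * w - s ^+ 2 * (a + b) - u <= 0 ->
  q * X <= a -> b ^+ 2 <= K * X ^+ 2 -> s * K <= q ^+ 2 ->
  u ^+ 2 <= ((1 + s ^+ 2) * s * q * X) ^+ 2 ->
  (1 - 3%:R * s) * X <= G.
Proof.
move=> s_gt0 s_lt q_gt0 X_gt0 b_ge0 corr tail aX b_sq sK u_sq.
have s_lt1 : s < 1 by apply: lt_trans s_lt _; rewrite invf_lt1 ?ltr1n ?ltr0n.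
have bX : s ^+ 2 * b <= s * q * X.
  apply: le_of_sqr_le; first by rewrite !mulr_ge0 ?ltW.
  have := ler_wpM2l (exprn_ge0 4 (ltW s_gt0)) b_sq.
  have := ler_wpM2l (exprn_ge0 3 (ltW s_gt0)) (ler_wpM2r (sqr_ge0 X) sK).
  have : s ^+ 3 <= s ^+ 2 by rewrite !exprS expr0 !mulr1; nra.
  have := sqr_ge0 (q * X); nra.
have uX : u <= (1 + s ^+ 2) * s * q * X.
  apply: le_of_sqr_le u_sq; apply: mulr_ge0 (ltW X_gt0); apply: mulr_ge0 (ltW q_gt0).
  by apply: mulr_ge0 (ltW s_gt0); rewrite addr_ge0 ?sqr_ge0.
have d_gt0 : 0 < 1 - s ^+ 2 by nra.
(* [(1 - s^2) * corr + s^2 * tail] eliminates [w]. *)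
have mixed : (1 - 2%:R * s ^+ 2) * a - s ^+ 2 * b - u <= (1 - s ^+ 2) * G * q.
  have := ler_wpM2l (ltW d_gt0) corr; have := ler_wpM2l (sqr_ge0 s) tail; nra.
have combined : (1 - 2%:R * s - 2%:R * s ^+ 2 - s ^+ 3) * q * X <= (1 - s ^+ 2) * G * q.
  have : (1 - 2%:R * s ^+ 2) * (q * X) <= (1 - 2%:R * s ^+ 2) * a by rewrite ler_wpM2l //; nra.
  nra.
have : (1 - 3%:R * s) * (1 - s ^+ 2) * X <= (1 - s ^+ 2) * G.
  rewrite -(ler_pM2r q_gt0); apply: le_trans combined; rewrite -subr_ge0.
  have -> : (1 - 2%:R * s - 2%:R * s ^+ 2 - s ^+ 3) * q * X - (1 - 3%:R * s) * (1 - s ^+ 2) * X * q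
    = s * (1 - s - 4%:R * s ^+ 2) * (q * X) by ring.
  by rewrite !mulr_ge0 ?ltW // ?mulr_gt0 //; nra.
by rewrite mulrAC [(1 - s ^+ 2) * G]mulrC (ler_pM2r d_gt0).
Qed.

Lemma omp_gain_sqr_ge (s X g : R) : 0 < s -> s < 7%:R^-1 -> 0 <= X ->
  (1 - 3%:R * s) * X <= `|g| -> (1 - 7%:R * s) * X ^+ 2 <= g ^+ 2 / (1 + s ^+ 2).
Proof.
move=> s_gt0 s_lt X_ge0 Xg.
have s7 : s * 7%:R < 1 by rewrite -ltr_pdivlMr ?ltr0n // div1r.
rewrite ler_pdivlMr ?ltr_wpDr ?sqr_ge0 // -[g ^+ 2]real_normK ?num_real //.
have lhs_ge0 : 0 <= (1 - 3%:R * s) * X.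
  by rewrite mulr_ge0 //; lra.
have sq_le : ((1 - 3%:R * s) * X) ^+ 2 <= `|g| ^+ 2.
  by rewrite ler_sqr ?nnegrE // (le_trans lhs_ge0).
apply: le_trans _ sq_le; rewrite -subr_ge0.
have -> : ((1 - 3%:R * s) * X) ^+ 2 - (1 - 7%:R * s) * X ^+ 2 * (1 + s ^+ 2)
  = s * (1 + 8%:R * s + 7%:R * s ^+ 2) * X ^+ 2 by ring.
by rewrite !mulr_ge0 ?sqr_ge0 ?(ltW s_gt0) //; have := sqr_ge0 s; lra.
Qed.
End GainAlgebra.

Section OMPStep.
Variables (R : rcfType) (m n K : nat) (Phi : 'M[R]_(m, n)) (delta : R).
Variables (x : 'cV[R]_n) (v : 'cV[R]_m) (Tk : {set 'I_n}) (xk : 'cV[R]_n) (t : 'I_n).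
Hypotheses (delta_ge0 : 0 <= delta) (rip : RIP_ineq (2 * K) Phi delta).
Hypotheses (card_x : #|supp x| = K) (card_Tk : (#|Tk| <= K)%N) (supp_xk : supp xk \subset Tk).
Local Notation r := (resid Phi (Phi *m x + v) xk).
Hypothesis xk_min :
  forall u, supp u \subset Tk -> sqnorm r <= sqnorm (resid Phi (Phi *m x + v) u).
Hypothesis t_max : forall i, i \notin Tk -> `|colcorr Phi i r| <= `|colcorr Phi t r|.

Let z := x - xk.
Let U := supp x :|: Tk.

Let card_U : (#|U| <= 2 * K)%N.
Proof. by rewrite (leq_trans (leq_card_setU _ _)) // card_x mul2n -addnn leq_add2l. Qed.

Let supp_restrict_U A : supp (restrict z A) \subset U.
Proof.
apply: subset_trans (subset_trans (supp_restrict z A) (subsetIl _ _)) _.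
apply/supp_subP => i; rewrite !inE negb_or negbK => /andP[/eqP xi iT].
by rewrite !mxE xi (supp_subP _ _ supp_xk) ?subr0.
Qed.

Let z_notin_Tk i : i \notin Tk -> z i 0 = x i 0.
Proof. by move=> iT; rewrite !mxE (supp_subP _ _ supp_xk) ?subr0. Qed.

Let resid_split A : r = Phi *m restrict z A + Phi *m restrict z (~: A) + v.
Proof. by rewrite -mulmxDr restrict_add_compl /resid mulmxBr addrAC. Qed.

Variable X : R.
Hypothesis X_ge0 : 0 <= X.
Let S := [set i in supp x :\: Tk | X <= `|x i 0|].
(* [a], [b] and [w] are the norms of the parts P, B and W of [z]. *)
Local Notation e := (Num.sqrt (1 + delta)).
Local Notation a := (enorm (restrict z S)).
Local Notation b := (enorm (restrict z (~: (S :|: Tk)))).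
Local Notation w := (enorm (restrict z Tk)).
Local Notation q := (Num.sqrt (#|S|%:R : R)).

Let S_Tk i : i \in S -> i \notin Tk.
Proof. by rewrite !inE => /andP[/andP[]]. Qed.

(* The selected column correlates with [r] at least as well as every column indexed by [S]. *)
Lemma omp_corr_selected_ge :
  (1 - delta) * a - delta * (b + w) - e * enorm v <= `|colcorr Phi t r| * q.
Proof.
apply: le_trans (_ : (1 - delta) * a - delta * enorm (restrict z (~: S)) - e * enorm v <= _).
  rewrite lerD2r lerD2l lerN2; apply: ler_wpM2l => //; apply: enorm_restrict_le.
  by apply/subsetP => i; rewrite !(in_setU, in_setC); case: (i \in S); case: (i \in Tk).
apply: (rip_resid_corr_le delta_ge0 rip card_U (supp_restrict_U _) (supp_restrict_U _)
  (restrict_mul_compl z S)); first by rewrite mulr_ge0 ?sqrtr_ge0.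
rewrite -resid_split mulrC -mulrA.
apply: dot_mulmx_le; rewrite ?normr_ge0 //.
  exact: subset_trans (supp_restrict _ _) (subsetIr _ _).
by move=> i /S_Tk /t_max.
Qed.

(* [r] is orthogonal to every [Phi u] with [u] supported on [Tk]. *)
Lemma omp_tail_le : (1 - delta) * w - delta * (a + b) - e * enorm v <= 0.
Proof.
apply: le_trans (_ : (1 - delta) * w - delta * enorm (restrict z (~: Tk)) - e * enorm v <= _).
  rewrite lerD2r lerD2l lerN2; apply: ler_wpM2l => //; apply: enorm_restrict_le.
  by apply/subsetP => i; rewrite !(in_setU, in_setC); case: (i \in S); case: (i \in Tk).
apply: (rip_resid_corr_le delta_ge0 rip card_U (supp_restrict_U _) (supp_restrict_U _)
  (restrict_mul_compl z Tk)) => //.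
rewrite -resid_split mulr0 (lsq_orth xk_min supp_xk) //.
exact: subset_trans (supp_restrict _ _) (subsetIr _ _).
Qed.

Lemma omp_large_part_ge : q * X <= a.
Proof.
apply: le_of_sqr_le; rewrite ?enorm_ge0 // exprMn sqr_sqrtr ?ler0n // sqr_enorm.
apply: sqnorm_restrict_ge => // i iS; rewrite z_notin_Tk ?S_Tk //.
by move: iS; rewrite inE => /andP[].
Qed.

Lemma omp_small_part_le : b ^+ 2 <= K%:R * X ^+ 2.
Proof.
rewrite sqr_enorm -card_x; apply: sqnorm_le_card => [|i ix].
  apply/supp_subP => i; rewrite inE negbK mxE => /eqP xi0; case: ifP => //.
  by rewrite !inE negb_or => /andP[_ /z_notin_Tk ->].
rewrite mxE; case: ifP; rewrite ?normr0 // !inE negb_or => /andP[iS iT].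
have xi0 : x i 0 != 0 by rewrite inE in ix.
by move: iS; rewrite iT xi0 /= => iS; rewrite z_notin_Tk // ltW // ltNge.
Qed.

Lemma omp_noise_le (s : R) (j : 'I_n) :
  0 < s -> delta = s ^+ 2 -> j \in supp x -> X = `|x j 0| -> s * K%:R <= #|S|%:R ->
  dyn_range x ^+ 2 / (delta * s) * sqnorm v <= sqnorm (Phi *m x) ->
  sqnorm v <= delta * (1 + delta) * #|S|%:R * X ^+ 2.
Proof.
move=> s_gt0 deltaE jx XE sK snr; set kap := dyn_range x in snr.
have X_gt0 : 0 < X by rewrite XE normr_gt0; rewrite inE in jx.
have x_le i : i \in supp x -> `|x i 0| <= kap * X.
  by move=> ix; rewrite -ler_pdivrMr // XE dyn_range_ge.
have kap_gt0 : 0 < kap.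
  by rewrite -(pmulr_lgt0 _ X_gt0); apply: lt_le_trans (x_le j jx); rewrite -XE.
have Phix : sqnorm (Phi *m x) <= (1 + delta) * (K%:R * (kap * X) ^+ 2).
  have x_U : supp x \subset U by apply: subsetUl.
  apply: le_trans (rip_upper rip card_U x_U) _.
  apply: ler_wpM2l; first by rewrite addr_ge0.
  by rewrite -card_x; apply: sqnorm_le_card.
have ds_gt0 : 0 < delta * s by rewrite deltaE mulr_gt0 ?exprn_gt0.
have := le_trans snr Phix; rewrite mulrAC ler_pdivrMr // exprMn.
have -> : (1 + delta) * (K%:R * (kap ^+ 2 * X ^+ 2)) * (delta * s)
  = kap ^+ 2 * (delta * (1 + delta) * X ^+ 2 * (s * K%:R)) by ring.
rewrite ler_pM2l ?exprn_gt0 // => /le_trans; apply.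
rewrite [Y in _ <= Y]mulrAC; apply: ler_wpM2l sK.
by rewrite !mulr_ge0 ?addr_ge0 ?sqr_ge0.
Qed.

Lemma omp_selected_corr_lower (s : R) :
  0 < s -> s < 7%:R^-1 -> delta = s ^+ 2 -> 0 < X -> (0 < #|S|)%N -> s * K%:R <= #|S|%:R ->
  sqnorm v <= delta * (1 + delta) * #|S|%:R * X ^+ 2 ->
  (1 - 3%:R * s) * X <= `|colcorr Phi t r|.
Proof.
move=> s_gt0 s_lt deltaE X_gt0 S_gt0 sK noise.
have e_sq : e ^+ 2 = 1 + delta by rewrite sqr_sqrtr ?addr_ge0.
apply: (omp_gain_factor (a := a) (b := b) (w := w) (u := e * enorm v) (q := q) (K := K%:R)) => //.
- by rewrite sqrtr_gt0 ltr0n.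
- exact: enorm_ge0.
- by rewrite -deltaE omp_corr_selected_ge.
- by rewrite -deltaE omp_tail_le.
- exact: omp_large_part_ge.
- exact: omp_small_part_le.
- by rewrite sqr_sqrtr ?ler0n.
rewrite -deltaE exprMn e_sq sqr_enorm.
have -> : ((1 + delta) * s * q * X) ^+ 2 = (1 + delta) * (delta * (1 + delta) * #|S|%:R * X ^+ 2).
  by rewrite !exprMn sqr_sqrtr ?ler0n // deltaE; ring.
by apply: ler_wpM2l; rewrite ?addr_ge0.
Qed.

End OMPStep.

Lemma omp_residual_decrease (R : rcfType) m n (Phi : 'M[R]_(m, n)) y K T xs s d k t :
  OMP_run Phi y K T xs -> RIP_ineq s Phi d -> (0 < s)%N -> 0 <= d -> (k < K)%N ->
  T k.+1 = t |: T k ->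
  colcorr Phi t (resid Phi y (xs k)) ^+ 2 / (1 + d)
    <= sqnorm (resid Phi y (xs k)) - sqnorm (resid Phi y (xs k.+1)).
Proof.
move=> omp rip s_gt0 d_ge0 kK Tk1.
have [_ supp_xk _] := omp_run_inv omp (ltnW kK).
have [_ _ xk1_min] := omp_run_inv omp kK.
have et_T : supp (delta_mx t 0 : 'cV[R]_n) \subset T k.+1.
  by apply/supp_subP => i; rewrite Tk1 !inE negb_or mxE => /andP[/negbTE -> _].
have xk_T : supp (xs k) \subset T k.+1 by rewrite Tk1 (subset_trans supp_xk) ?subsetUr.
rewrite colcorrE; apply: (lsq_decrease xk1_min xk_T et_T); first by rewrite ltr_wpDr.
have et_sparse : sparse s (delta_mx t 0 : 'cV[R]_n).
  apply: leq_trans (subset_leq_card (_ : _ \subset [set t])) _; last by rewrite cards1.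
  by apply/supp_subP => i; rewrite !inE mxE => /negbTE ->.
have [_ /le_trans] := rip _ et_sparse; apply; rewrite ler_piMr ?addr_ge0 //.
rewrite /sqnorm (bigD1 t) //= big1 => [|i /negbTE it]; last by rewrite !mxE it expr0n.
by rewrite !mxE !eqxx expr1n addr0.
Qed.

Theorem proposition2 (R : rcfType) (m n K : nat) (Phi : 'M[R]_(m, n))
  (delta : R) (x : 'cV[R]_n) (v : 'cV[R]_m)
  (T : nat -> {set 'I_n}) (xs : nat -> 'cV[R]_n) (c : nat) :
  (1 <= K)%N ->
  is_RIC (2 * K) Phi delta -> 0 < delta ->
  #|supp x| = K ->
  (dyn_range x) ^+ 2 / (delta * Num.sqrt delta) * sqnorm v <= sqnorm (Phi *m x) ->
  OMP_run Phi (Phi *m x + v) K T xs ->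
  is_ceil (Num.sqrt delta * K%:R) c ->
  forall k : nat, (k + c <= K)%N -> (k < K)%N ->
    sqnorm (resid Phi (Phi *m x + v) (xs k))
      - sqnorm (resid Phi (Phi *m x + v) (xs k.+1))
    >= (1 - 7%:R * Num.sqrt delta) * (kth_largest x (supp x :\: T k) c) ^+ 2.
Proof.
move=> K_gt0 [delta_ge0 _ rip _] delta_gt0 card_x snr omp [_ sK_le_c] k kc kK.
set s := Num.sqrt delta in snr sK_le_c *; set X := kth_largest _ _ _.
have s_gt0 : 0 < s by rewrite sqrtr_gt0.
have deltaE : delta = s ^+ 2 by rewrite sqr_sqrtr // ltW.
have [card_Tk supp_xk xk_min] := omp_run_inv omp (ltnW kK).
have [_ _ /(_ k kK) [t [_ t_max Tk1 _ _]]] := omp.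
have K2_gt0 : (0 < 2 * K)%N by rewrite muln_gt0.
apply: le_trans (omp_residual_decrease omp rip K2_gt0 delta_ge0 kK Tk1).
have [s_ge|s_lt] := leP (7%:R^-1) s.
  rewrite (le_trans (_ : _ <= 0)) ?divr_ge0 ?sqr_ge0 ?addr_ge0 // mulr_le0_ge0 ?sqr_ge0 //.
  by rewrite subr_le0 -ler_pdivrMl ?ltr0n // mulr1.
have c_gt0 : (0 < c)%N by rewrite -(ltr0n R); apply: lt_le_trans sK_le_c; rewrite mulr_gt0 ?ltr0n.
have c_range : (1 <= c <= #|supp x :\: T k|)%N.
  have cap_le_k := leq_trans (subset_leq_card (subsetIr (supp x) (T k))) card_Tk.
  rewrite c_gt0 cardsD card_x leq_subRL ?(leq_trans cap_le_k) ?(leq_trans _ kc) ?leq_addr //.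
  by rewrite leq_add2r.
have [j jG XE] := kth_largest_mem x c_range; have S_ge_c := kth_largest_card x c_range.
have jx : j \in supp x by move: jG; rewrite inE => /andP[].
have X_gt0 : 0 < X by rewrite /X XE normr_gt0; rewrite inE in jx.
have sK_le_S : s * K%:R <= #|[set i in supp x :\: T k | X <= `|x i 0|]|%:R.
  by apply: le_trans sK_le_c _; rewrite ler_nat.
rewrite deltaE; apply: omp_gain_sqr_ge => //; first exact: ltW.
have Tk_le_K := leq_trans card_Tk (ltnW kK).
apply: (omp_selected_corr_lower delta_ge0 rip card_x Tk_le_K supp_xk xk_min t_max (ltW X_gt0))
  => //.
- exact: leq_trans c_gt0 S_ge_c.
- by apply: (omp_noise_le delta_ge0 rip card_x Tk_le_K (ltW X_gt0) s_gt0 deltaE jx XE sK_le_S).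
Qed.
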